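(* Let $m \ge 1$ and let $A_1,\dots,A_m$ be $d$-dimensional boxes forming a set of Gozinta Boxes, i.e. both the natural order $A_1,A_2,\dots,A_m$ and the reverse order $A_m,\dots,A_1$ (listed from innermost to outermost) are possible arrangements. Fix states of the boxes realizing these two arrangements. Then at least $m-1$ of the boxes are, in at least one of the two arrangements, expanded along their smallest side (a side whose closed length is the minimum closed side length of that box).
   Context: A $d$-dimensional box $A$ has closed side lengths $a_1\le a_2\le\dots\le a_d$ (positive reals). A state of $A$ is either closed (side lengths $a_1,\dots,a_d$) or expanded along one side $i$: the side $a_i$ is replaced by a length $a_i'$ with $a_i\le a_i'\le 2a_i$ (expansion bound), all other sides unchanged; only one side can expand. The dimension vector of a state is its multiset of side lengths sorted in non-decreasing order. A box $X$ in some state fits inside a box $Y$ in some state if every coordinate of the dimension vector of $Y$ is strictly larger than the corresponding coordinate of the dimension vector of $X$. An order $X_1,\dots,X_k$ (innermost to outermost) of a collection of boxes is a possible arrangement if each box can be assigned a state so that $X_j$ fits inside $X_{j+1}$ for all $j$; a box may be in different states in different arrangements. *)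

From mathcomp Require Import all_boot all_order all_algebra.
Set Implicit Arguments. Unset Strict Implicit. Unset Printing Implicit Defensive.
Import Order.TTheory GRing.Theory Num.Theory.
Local Open Scope ring_scope.

(* A d-dimensional box is given by its closed side lengths, indexed by 'I_d
   (box_ok: all positive).  A state is [None] (closed) or [Some (i, l)]:
   expanded along side i, whose length becomes l. *)
Definition box (R : realFieldType) (d : nat) := 'I_d -> R.
Definition state (R : realFieldType) (d : nat) := option ('I_d * R).

Definition box_ok (R : realFieldType) (d : nat) (a : box R d) : Prop :=
  forall i, 0 < a i.

Definition state_ok (R : realFieldType) (d : nat) (a : box R d) (s : state R d) : Prop :=
  match s with
  | None => True
  | Some (i, l) => a i <= l <= 2 * a i
  end.

Definition side_len (R : realFieldType) (d : nat) (a : box R d) (s : state R d) (j : 'I_d) : R :=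
  match s with
  | Some (i, l) => if j == i then l else a j
  | None => a j
  end.

Definition dimvec (R : realFieldType) (d : nat) (a : box R d) (s : state R d) : seq R :=
  sort <=%R [seq side_len a s j | j <- enum 'I_d].

Definition fits (R : realFieldType) (d : nat) (a : box R d) (s : state R d)
  (b : box R d) (t : state R d) : Prop :=
  all2 (fun x y => x < y) (dimvec a s) (dimvec b t).

Definition expanded_smallest (R : realFieldType) (d : nat) (a : box R d) (s : state R d) : bool :=
  match s with
  | Some (i, _) => [forall j, a i <= a j]
  | None => false
  end.

(* Let h be the smallest entry of a dimension vector.  Fitting forces h to
   increase strictly, so h increases along the natural arrangement and
   decreases along the reverse one.  A box that is not expanded along a
   smallest side has h equal to its smallest closed side length in either
   state.  Two such boxes j < k would give, from the two arrangements,
   both min A_j < min A_k and min A_k < min A_j. *)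
From mathcomp Require Import all_boot all_order all_algebra.
From mathcomp Require Import zify.
Set Implicit Arguments. Unset Strict Implicit. Unset Printing Implicit Defensive.
Import Order.TTheory GRing.Theory Num.Theory.
Local Open Scope ring_scope.

Lemma ord_homo_lt (T : Type) (r : T -> T -> Prop) m (f : 'I_m -> T) :
  (forall y x z, r x y -> r y z -> r x z) ->
  (forall i j : 'I_m, val j = (val i).+1 -> r (f i) (f j)) ->
  forall i j : 'I_m, (val i < val j)%N -> r (f i) (f j).
Proof.
case: m f => [|m] f r_trans r_succ i; first by case: i.
pose g n := f (inord n).
have homo_g : {in [pred n | (n < m.+1)%N] &, {homo g : i j / (i < j)%N >-> r i j}}.
  apply: homo_ltn_in => // [i' j' _ j'_lt k' /andP[_ k'_lt]|i' _ Si'_lt].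
    by rewrite inE (ltn_trans k'_lt j'_lt).
  move: Si'_lt; rewrite inE => Si'_lt.
  by apply: r_succ; rewrite /= !inordK // ltnW.
move=> j lt_ij; have := homo_g _ _ (ltn_ord i) (ltn_ord j) lt_ij.
by rewrite /g !inord_val.
Qed.

Section LeastDimension.
Variables (R : realFieldType) (d : nat).
Implicit Types (a b : box R d) (s t : state R d).

Definition least_dim a s : R := head 0 (dimvec a s).

Lemma size_dimvec a s : size (dimvec a s) = d.
Proof. by rewrite size_sort size_map size_enum_ord. Qed.

Lemma least_dim_le a s j : least_dim a s <= side_len a s j.
Proof.
have : side_len a s j \in dimvec a s by rewrite mem_sort map_f ?mem_enum.
rewrite /least_dim; have := sort_le_sorted [seq side_len a s j | j <- enum 'I_d].
rewrite -/(dimvec a s); case: (dimvec a s) => [|x t] //= sorted_xt.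
rewrite inE => /predU1P[-> //|t_j].
by move: (order_path_min le_trans sorted_xt) => /allP; apply.
Qed.

Lemma least_dim_side a s : (0 < d)%N -> exists j, least_dim a s = side_len a s j.
Proof.
move=> d_gt0; have : least_dim a s \in dimvec a s.
  rewrite /least_dim; move: (size_dimvec a s).
  case: (dimvec a s) => [|x t _]; last exact: mem_head.
  by move=> d0; rewrite -d0 in d_gt0.
by rewrite mem_sort => /mapP[j _ ->]; exists j.
Qed.

Lemma le_side_len a s j : state_ok a s -> a j <= side_len a s j.
Proof. by case: s => [[i l]|] //= /andP[le_il _]; case: eqP => [->|]. Qed.

Lemma exists_smallest_side a : (0 < d)%N -> exists j0, forall j, a j0 <= a j.
Proof.
move=> d_gt0; have [j0 _ j0_min] := arg_minP a (isT : predT (Ordinal d_gt0)).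
by exists j0 => j; apply: j0_min.
Qed.

Lemma least_dim_unexpanded a s j0 : (0 < d)%N -> state_ok a s ->
  (forall j, a j0 <= a j) -> ~~ expanded_smallest a s -> least_dim a s = a j0.
Proof.
move=> d_gt0 s_ok j0_min not_exp; apply/le_anti/andP; split.
  have := least_dim_le a s j0; case: s s_ok not_exp => [[i l]|] //= _.
  by case: eqP => // <-; rewrite (introT forallP j0_min).
have [j ->] := least_dim_side a s d_gt0.
exact: le_trans (j0_min j) (le_side_len j s_ok).
Qed.

Lemma fits_least_dim a s b t : (0 < d)%N -> fits a s b t ->
  least_dim a s < least_dim b t.
Proof.
rewrite /fits /least_dim; move: (size_dimvec a s) (size_dimvec b t).
case: (dimvec a s) (dimvec b t) => [|x u] [|y v] //= <-; first by rewrite ltnn.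
by move=> _ _ /andP[].
Qed.

End LeastDimension.

Section GozintaPair.
Variables (R : realFieldType) (d m : nat) (A : 'I_m -> box R d).
Variables (sN sR : 'I_m -> state R d).
Hypothesis d_gt0 : (0 < d)%N.
Hypothesis okN : forall k, state_ok (A k) (sN k).
Hypothesis okR : forall k, state_ok (A k) (sR k).
Hypothesis fitsN : forall i j : 'I_m, val j = (val i).+1 ->
  fits (A i) (sN i) (A j) (sN j).
Hypothesis fitsR : forall i j : 'I_m, val j = (val i).+1 ->
  fits (A j) (sR j) (A i) (sR i).

Let expanded k := expanded_smallest (A k) (sN k) || expanded_smallest (A k) (sR k).

Lemma least_dim_increasing (i j : 'I_m) : (val i < val j)%N ->
  least_dim (A i) (sN i) < least_dim (A j) (sN j).
Proof.
apply: (ord_homo_lt (r := fun x y : R => x < y) (f := fun k => least_dim (A k) (sN k))).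
  exact: lt_trans.
move=> i' j' /fitsN.
exact: fits_least_dim.
Qed.

Lemma least_dim_decreasing (i j : 'I_m) : (val i < val j)%N ->
  least_dim (A j) (sR j) < least_dim (A i) (sR i).
Proof.
apply: (ord_homo_lt (r := fun x y : R => y < x) (f := fun k => least_dim (A k) (sR k))).
  by move=> y x z lt_yx lt_zy; exact: lt_trans lt_zy lt_yx.
move=> i' j' /fitsR.
exact: fits_least_dim.
Qed.

Lemma expanded_smallest_pair (j k : 'I_m) :
  (val j < val k)%N -> expanded j || expanded k.
Proof.
move=> lt_jk; apply: contraT.
rewrite /expanded !negb_or => /andP[/andP[jN jR] /andP[kN kR]].
have [j0 j0_min] := exists_smallest_side (A j) d_gt0.
have [k0 k0_min] := exists_smallest_side (A k) d_gt0.
have := least_dim_increasing lt_jk; have := least_dim_decreasing lt_jk.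
rewrite (least_dim_unexpanded d_gt0 (okN j) j0_min jN).
rewrite (least_dim_unexpanded d_gt0 (okR j) j0_min jR).
rewrite (least_dim_unexpanded d_gt0 (okN k) k0_min kN).
rewrite (least_dim_unexpanded d_gt0 (okR k) k0_min kR).
by move=> /lt_trans lt_kj /lt_kj; rewrite ltxx.
Qed.

End GozintaPair.

Theorem proposition7 (R : realFieldType) (d m : nat) (A : 'I_m -> box R d)
  (sN sR : 'I_m -> state R d) :
  (0 < d)%N -> (1 <= m)%N ->
  (forall k, box_ok (A k)) ->
  (forall k, state_ok (A k) (sN k)) ->
  (forall k, state_ok (A k) (sR k)) ->
  (* natural order A_1, ..., A_m (innermost to outermost) realized by sN *)
  (forall i j : 'I_m, val j = (val i).+1 -> fits (A i) (sN i) (A j) (sN j)) ->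
  (* reverse order A_m, ..., A_1 realized by sR *)
  (forall i j : 'I_m, val j = (val i).+1 -> fits (A j) (sR j) (A i) (sR i)) ->
  (m - 1 <= #|[set k : 'I_m | expanded_smallest (A k) (sN k)
                              || expanded_smallest (A k) (sR k)]|)%N.
Proof.
move=> d_gt0 _ _ okN okR fitsN fitsR.
set S := [set k | _].
have unexpanded_le1 : (#|~: S| <= 1)%N.
  apply/card_le1_eqP => j k; rewrite !inE => jS kS; apply: val_inj.
  have pair := expanded_smallest_pair d_gt0 okN okR fitsN fitsR.
  case: (ltngtP (val j) (val k)) => // [/pair|/pair];
    by rewrite ?(negbTE jS) ?(negbTE kS).
by move: (cardsC S); rewrite card_ord; lia.
Qed.
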